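(* Let $\gamma_*>0$ and let $\Phi$ denote the standard normal CDF. Define \[ t_+=\tfrac32\gamma_*+\tfrac{1}{\gamma_*}\log\left(1-\sqrt{1-e^{-\gamma_*}}\right),\qquad t_-=\tfrac32\gamma_*+\tfrac{1}{\gamma_*}\log\left(1+\sqrt{1-e^{-\gamma_*}}\right), \] and for $x\neq 0$ \[ \tilde h(x)=\frac{\Phi(t_--x)-\Phi(t_-)}{\Phi(t_+-x)-\Phi(t_+)}. \] Let $k=e^{-\frac12(t_--2\gamma_* )^2+\frac12(t_+-2\gamma_* )^2}$ and $c=\frac{k}{1+k}$. Then $\tilde h(x)\le\frac{c}{1-c}$ for all $x<0$. *)

From Stdlib Require Import Reals Lra.
From Coquelicot Require Import Coquelicot.
Open Scope R_scope.

Definition std_normal_pdf (t : R) : R := exp (- t ^ 2 / 2) / sqrt (2 * PI).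

Definition Phi (x : R) : R :=
  RInt_gen std_normal_pdf (Rbar_locally m_infty) (at_point x).

Definition t_plus (g : R) : R :=
  3 / 2 * g + / g * ln (1 - sqrt (1 - exp (- g))).
Definition t_minus (g : R) : R :=
  3 / 2 * g + / g * ln (1 + sqrt (1 - exp (- g))).

Definition h_tilde (g x : R) : R :=
  (Phi (t_minus g - x) - Phi (t_minus g)) / (Phi (t_plus g - x) - Phi (t_plus g)).

Definition k_const (g : R) : R :=
  exp (- / 2 * (t_minus g - 2 * g) ^ 2 + / 2 * (t_plus g - 2 * g) ^ 2).

Definition c_const (g : R) : R := k_const g / (1 + k_const g).

(** Shifting both integrals of [h_tilde] to the interval [0, -x], the claim reduces to the
    pointwise bound [phi (t_- + u) <= k phi (t_+ + u)] for [u >= 0], and [c/(1-c) = k].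
    The Gaussian likelihood ratio [phi (t_- + u) / phi (t_+ + u)] is nonincreasing in [u]
    because [t_+ <= t_-], and [k] is its value at [u = -2 g <= 0].  The only analytic
    work is to make [Phi] meaningful: the improper integral converges because its partial
    integrals are monotone and bounded, [phi t] being dominated by [e^(t + 1/2) / sqrt(2 pi)]. *)
From Stdlib Require Import Reals Lra Classical.
From Coquelicot Require Import Coquelicot.
Open Scope R_scope.

Lemma exp_le_compat (x y : R) : x <= y -> exp x <= exp y.
Proof. intros [Hlt | ->]; [left; apply exp_increasing, Hlt | right; reflexivity]. Qed.

Lemma is_RInt_gen_m_infty_of_bounded (f : R -> R) (b M : R) :
  (forall t, 0 <= f t) -> (forall a c, ex_RInt f a c) ->
  (forall a, a <= b -> RInt f a b <= M) ->
  exists l, is_RInt_gen f (Rbar_locally m_infty) (at_point b) l.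
Proof.
  intros f_ge0 f_int f_bound.
  assert (antitone : forall a1 a2, a1 <= a2 -> RInt f a2 b <= RInt f a1 b).
  { intros a1 a2 Ha.
    rewrite <- (RInt_Chasles f a1 a2 b) by apply f_int.
    assert (0 <= RInt f a1 a2) by (apply RInt_ge_0; auto).
    change (plus ?u ?v) with (u + v); lra. }
  set (E := fun y => exists a, a <= b /\ y = RInt f a b).
  destruct (completeness E) as [l [l_ub l_least]].
  { exists M; intros y [a [Ha ->]]; auto. }
  { exists (RInt f b b), b; split; [lra | reflexivity]. }
  exists l. intros P [eps HP].
  assert (near_l : exists a0, a0 <= b /\ l - eps < RInt f a0 b).
  { apply NNPP; intro Hfar.
    assert (l <= l - eps) by
      (apply l_least; intros y [a [Ha ->]]; apply Rnot_lt_le; eauto).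
    pose proof (cond_pos eps); lra. }
  destruct near_l as [a0 [Ha0 Hclose]].
  apply Filter_prod with (fun a => a < a0) (fun y => y = b).
  - exists a0; auto.
  - reflexivity.
  - intros a y Ha ->. exists (RInt f a b). split.
    + apply (RInt_correct (V := R_CompleteNormedModule)), f_int.
    + apply HP. change (Rabs (RInt f a b - l) < eps).
      assert (RInt f a b <= l) by (apply l_ub; exists a; split; lra).
      assert (RInt f a0 b <= RInt f a b) by (apply antitone; lra).
      rewrite Rabs_left1; lra.
Qed.

Lemma RInt_translate (f : R -> R) (c s : R) :
  ex_RInt f c (c + s) -> RInt f c (c + s) = RInt (fun u => f (c + u)) 0 s.
Proof.
  intro Hf.
  assert (Hlin := RInt_comp_lin f 1 c 0 s).
  rewrite Rmult_0_r, Rmult_1_l, Rplus_0_l, Rplus_comm in Hlin.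
  rewrite <- (Hlin Hf). apply RInt_ext. intros u _.
  rewrite !Rmult_1_l, Rplus_comm. reflexivity.
Qed.

Lemma ex_RInt_translate (f : R -> R) (c s : R) :
  ex_RInt f c (c + s) -> ex_RInt (fun u => f (c + u)) 0 s.
Proof.
  intro Hf.
  assert (Hlin := ex_RInt_comp_lin f 1 c 0 s).
  rewrite Rmult_0_r, Rmult_1_l, Rplus_0_l, Rplus_comm in Hlin.
  refine (ex_RInt_ext _ _ _ _ _ (Hlin Hf)).
  intros u _. rewrite !Rmult_1_l, Rplus_comm. reflexivity.
Qed.

Lemma RInt_translate_le (f : R -> R) (k m p s : R) :
  0 <= s -> (forall a c, ex_RInt f a c) ->
  (forall u, 0 < u < s -> f (m + u) <= k * f (p + u)) ->
  RInt f m (m + s) <= k * RInt f p (p + s).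
Proof.
  intros Hs f_int Hle.
  rewrite !RInt_translate by apply f_int.
  rewrite <- (RInt_scal (V := R_CompleteNormedModule)) by apply ex_RInt_translate, f_int.
  apply RInt_le; auto.
  - apply ex_RInt_translate, f_int.
  - apply (ex_RInt_scal (V := R_NormedModule)), ex_RInt_translate, f_int.
Qed.

Lemma sqrt_2PI_pos : 0 < sqrt (2 * PI).
Proof. apply sqrt_lt_R0. pose proof PI_RGT_0; lra. Qed.

Lemma std_normal_pdf_pos (t : R) : 0 < std_normal_pdf t.
Proof. apply Rdiv_lt_0_compat; [apply exp_pos | apply sqrt_2PI_pos]. Qed.

Lemma std_normal_pdf_continuous (t : R) : continuous std_normal_pdf t.
Proof.
  apply (ex_derive_continuous (K := R_AbsRing) (V := R_NormedModule)).
  unfold std_normal_pdf. auto_derive. pose proof sqrt_2PI_pos; lra.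
Qed.

Lemma ex_RInt_std_normal_pdf (a b : R) : ex_RInt std_normal_pdf a b.
Proof.
  apply (ex_RInt_continuous (V := R_CompleteNormedModule)).
  intros; apply std_normal_pdf_continuous.
Qed.

Lemma std_normal_pdf_le_exp (t : R) :
  std_normal_pdf t <= exp (t + / 2) / sqrt (2 * PI).
Proof.
  apply Rmult_le_compat_r.
  - left; apply Rinv_0_lt_compat, sqrt_2PI_pos.
  - apply exp_le_compat. pose proof (pow2_ge_0 (t + 1)). nra.
Qed.

Lemma RInt_std_normal_pdf_le (a b : R) :
  a <= b -> RInt std_normal_pdf a b <= exp (b + / 2) / sqrt (2 * PI).
Proof.
  intro Hab.
  set (F := fun t => exp (t + / 2) / sqrt (2 * PI)).
  assert (F_deriv : forall t, is_derive F t (F t)).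
  { intro t. unfold F. auto_derive; [auto | field; pose proof sqrt_2PI_pos; lra]. }
  assert (F_int : is_RInt F a b (F b - F a)).
  { apply (is_RInt_derive F F); intros t _; [apply F_deriv |].
    apply (ex_derive_continuous (K := R_AbsRing) (V := R_NormedModule)).
    eexists; apply F_deriv. }
  apply Rle_trans with (RInt F a b).
  - apply RInt_le; auto.
    + apply ex_RInt_std_normal_pdf.
    + eexists; apply F_int.
    + intros; apply std_normal_pdf_le_exp.
  - rewrite (is_RInt_unique _ _ _ _ F_int).
    assert (0 < F a) by (apply Rdiv_lt_0_compat; [apply exp_pos | apply sqrt_2PI_pos]).
    unfold F at 1; lra.
Qed.

Lemma is_RInt_gen_Phi (b : R) :
  is_RInt_gen std_normal_pdf (Rbar_locally m_infty) (at_point b) (Phi b).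
Proof.
  destruct (is_RInt_gen_m_infty_of_bounded std_normal_pdf b (exp (b + / 2) / sqrt (2 * PI)))
    as [l Hl].
  - intro t; left; apply std_normal_pdf_pos.
  - apply ex_RInt_std_normal_pdf.
  - intros a Ha; exact (RInt_std_normal_pdf_le a b Ha).
  - unfold Phi. now rewrite (is_RInt_gen_unique _ _ Hl).
Qed.

Lemma Phi_sub (x y : R) : Phi y - Phi x = RInt std_normal_pdf x y.
Proof.
  assert (Hxy : is_RInt_gen std_normal_pdf (at_point x) (at_point y)
                  (RInt std_normal_pdf x y)).
  { apply is_RInt_gen_at_point, (RInt_correct (V := R_CompleteNormedModule)).
    apply ex_RInt_std_normal_pdf. }
  assert (Hy := is_RInt_gen_unique _ _ (is_RInt_gen_Chasles _ _ _ _ (is_RInt_gen_Phi x) Hxy)).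
  fold (Phi y) in Hy. rewrite Hy. change (plus ?u ?v) with (u + v). ring.
Qed.

Lemma std_normal_pdf_translate_le (m p d u : R) :
  p <= m -> 0 <= u + d ->
  std_normal_pdf (m + u) <=
  exp (- / 2 * (m - d) ^ 2 + / 2 * (p - d) ^ 2) * std_normal_pdf (p + u).
Proof.
  intros Hpm Hud. unfold std_normal_pdf, Rdiv.
  rewrite <- Rmult_assoc, <- exp_plus.
  apply Rmult_le_compat_r; [left; apply Rinv_0_lt_compat, sqrt_2PI_pos |].
  apply exp_le_compat.
  assert (0 <= (m - p) * (u + d)) by (apply Rmult_le_pos; lra).
  nra.
Qed.

Lemma t_plus_le_t_minus (g : R) : 0 < g -> t_plus g <= t_minus g.
Proof.
  intro Hg. unfold t_plus, t_minus.
  assert (Hexp : 0 < exp (- g) <= 1).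
  { split; [apply exp_pos |]. rewrite <- exp_0. apply exp_le_compat. lra. }
  assert (Hsqrt : 0 <= sqrt (1 - exp (- g)) < 1).
  { split; [apply sqrt_pos |].
    assert (Hlt := sqrt_lt_1_alt (1 - exp (- g)) 1). rewrite sqrt_1 in Hlt.
    apply Hlt; lra. }
  apply Rplus_le_compat_l, Rmult_le_compat_l.
  - left; apply Rinv_0_lt_compat, Hg.
  - apply ln_le; lra.
Qed.

Lemma c_const_odds (g : R) : c_const g / (1 - c_const g) = k_const g.
Proof.
  assert (0 < k_const g) by apply exp_pos.
  unfold c_const. field. lra.
Qed.

Theorem lemma8 (g : R) (hg : 0 < g) (x : R) (hx : x < 0) :
  h_tilde g x <= c_const g / (1 - c_const g).
Proof.
  rewrite c_const_odds. unfold h_tilde. rewrite !Phi_sub.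
  replace (t_minus g - x) with (t_minus g + - x) by ring.
  replace (t_plus g - x) with (t_plus g + - x) by ring.
  apply Rle_div_l.
  - apply RInt_gt_0; [lra | |]; intros;
      [apply std_normal_pdf_pos | apply std_normal_pdf_continuous].
  - apply RInt_translate_le; [lra | apply ex_RInt_std_normal_pdf |].
    intros u Hu. apply std_normal_pdf_translate_le; [apply t_plus_le_t_minus, hg | lra].
Qed.
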